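(* Let $A=\{[x_i^a,y_i^a]\}_{i=1}^{n_a}$ and $B=\{[x_i^b,y_i^b]\}_{i=1}^{n_b}$ be persistence barcodes in $\mathcal{B}_F$ with $L_a,L_b>0$. If $r_\infty(A,B)\le 1/4$, then $$\|S(A)-S(B)\|_1\le -2L_{\min}\,r_\infty(A,B)\log\big(2r_\infty(A,B)\big)+2d_\infty(A,B)\log n_{\max}\le 2r_\infty(A,B)\left(-L_{\min}\log\big(2r_\infty(A,B)\big)+L_{\max}\frac{\log n_{\max}}{n_{\max}}\right).$$
   Context: A persistence barcode is a finite multiset of intervals $[x,y]$, $x\le y$; $\mathcal{B}_F$ is the set of barcodes all of whose intervals have finite endpoints. For $A$ write $\ell_i^a=y_i^a-x_i^a$, $L_a=\sum_i\ell_i^a$; similarly for $B$; $n_{\max}=\max\{n_a,n_b\}$, $L_{\max}=\max\{L_a,L_b\}$, $L_{\min}=\min\{L_a,L_b\}$. Bottleneck distance: pad the smaller barcode with zero-length intervals $[t,t]$ so both have $n_{\max}$ intervals, and $d_\infty(A,B)=\min_\gamma\max_i\max\{|x_i^a-x^b_{\gamma(i)}|,|y_i^a-y^b_{\gamma(i)}|\}$ over bijections $\gamma$ (and paddings). Relative error: $r_\infty(A,B)=2n_{\max}d_\infty(A,B)/L_{\max}$. The entropy summary function of $A$ is the step function $S(A):\mathbb{R}\to\mathbb{R}$, $S(A)[t]=-\sum_{i=1}^{n_a}w_i^a(t)\frac{\ell_i^a}{L_a}\log\frac{\ell_i^a}{L_a}$, where $w_i^a(t)=1$ if $x_i^a\le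 t\le y_i^a$ and $0$ otherwise (convention $0\log0=0$). $\|h\|_1=\int_{\mathbb{R}}|h(t)|\,dt$. *)

From HB Require Import structures.
From mathcomp Require Import all_boot all_order all_algebra all_fingroup.
From mathcomp Require Import all_classical all_reals all_analysis.
Set Implicit Arguments. Unset Strict Implicit. Unset Printing Implicit Defensive.
Import Order.TTheory GRing.Theory Num.Theory.
Local Open Scope ring_scope.

Section Barcodes.
Variable R : realType.

(* A barcode is a finite multiset of intervals [x,y], represented as a list
   of endpoint pairs (x,y); order of the list is irrelevant for all notions below. *)
Definition barcode := seq (R * R).

(* membership in B_F: all endpoints finite (automatic for reals) and x <= y *)
Definition valid_barcode (A : barcode) : bool := all (fun p => p.1 <= p.2) A.

Definition ilen (p : R * R) : R := p.2 - p.1.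

Definition total_len (A : barcode) : R := \sum_(p <- A) ilen p.

(* entropy summary function S(A)[t]; ln 0 = 0 in MathComp-Analysis, so 0 log 0 = 0 *)
Definition entropy_summary (A : barcode) (t : R) : R :=
  - \sum_(p <- A)
      (if (p.1 <= t) && (t <= p.2)
       then (ilen p / total_len A) * ln (ilen p / total_len A) else 0).

Definition nmax (A B : barcode) : nat := maxn (size A) (size B).

Definition pad (A : barcode) (ts : seq R) : barcode := A ++ [seq (t, t) | t <- ts].

Definition match_cost (n : nat) (PA PB : barcode) (g : 'S_n) : R :=
  \big[Num.max/0]_(i < n)
    Num.max `|(nth (0,0) PA i).1 - (nth (0,0) PB (g i)).1|
            `|(nth (0,0) PA i).2 - (nth (0,0) PB (g i)).2|.

(* bottleneck distance: min over paddings (only the smaller barcode gets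
   n_max - n padding intervals; for the larger one the padding is empty)
   and over bijections gamma *)
Definition bottleneck (A B : barcode) : R :=
  inf [set c : R | exists (tsA tsB : seq R) (g : 'S_(nmax A B)),
         [/\ size tsA = (nmax A B - size A)%N,
             size tsB = (nmax A B - size B)%N &
             c = @match_cost (nmax A B) (pad A tsA) (pad B tsB) g]].

Definition Lmax (A B : barcode) : R := Num.max (total_len A) (total_len B).
Definition Lmin (A B : barcode) : R := Num.min (total_len A) (total_len B).

Definition rel_error (A B : barcode) : R :=
  2 * (nmax A B)%:R * bottleneck A B / Lmax A B.

End Barcodes.

Definition L1_dist_entropy (R : realType) (A B : barcode R) : \bar R :=
  (\int[@lebesgue_measure R]_(t in [set: R])
     (`|entropy_summary A t - entropy_summary B t|)%:E)%E.

From HB Require Import structures.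
From mathcomp Require Import all_boot all_order all_algebra all_fingroup.
From mathcomp Require Import all_classical all_reals all_analysis.
From mathcomp Require Import measurable_realfun ring lra zify.
Set Implicit Arguments. Unset Strict Implicit. Unset Printing Implicit Defensive.
Import Order.TTheory GRing.Theory Num.Theory.
Local Open Scope ring_scope.

(* An optimal bottleneck matching, after padding, pairs the intervals of A
   and B index by index, so S(A) - S(B) is a sum of n differences
   p_i 1_{a_i} - q_i 1_{b_i} of weighted indicators, with weights
   p_i = entr(l_i^a / L_a) and q_i = entr(l_i^b / L_b).  Pointwise, such a
   difference is at most q_i times the indicators of the two gaps between
   matching endpoints, plus |p_i - q_i| on a_i.  The gaps have length at most
   d, the proportions l_i / L move by at most r = 2 n d / L_max, and for
   r <= 1/4 the entropy function entr x = - x ln x moves by at most entr r.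
   Integrating and using sum_i entr(q_i) <= ln n (concavity of entr at 1/n)
   gives ||S(A) - S(B)||_1 <= L_min entr r + 2 d ln n, and entr r <= entr (2 r). *)

Section EntropyFunction.
Variable R : realType.
Implicit Types x y m p q r : R.

Definition entr x : R := - (x * ln x).

Lemma entr0 : entr 0 = 0.
Proof. by rewrite /entr mul0r oppr0. Qed.

Lemma entr_ge0 x : 0 <= x <= 1 -> 0 <= entr x.
Proof. by case/andP=> x0 x1; rewrite oppr_ge0 mulr_ge0_le0 // ln_le0. Qed.

Lemma ln_le_subr1 x : 0 < x -> ln x <= x - 1.
Proof.
by move=> x0; have := @le_ln1Dx R (x - 1); rewrite [1 + _]addrC subrK; apply; lra.
Qed.

Lemma entr_le_tangent x m : 0 <= x -> 0 < m ->
  entr x <= entr m + (x - m) * (- ln m - 1).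
Proof.
move=> x0 m0; have [->|xn0] := eqVneq x 0; first by rewrite entr0 /entr; lra.
have xp : 0 < x by rewrite lt_def xn0.
have := ln_le_subr1 (divr_gt0 m0 xp); rewrite ln_div ?posrE //.
move=> /(ler_wpM2l x0); rewrite mulrBr [x * (m / x - 1)]mulrBr mulrCA divff // mulr1.
by rewrite /entr; lra.
Qed.

Lemma ln_le_N1 x : 0 < x -> x <= expR (-1) -> ln x <= -1.
Proof. by move=> x0 xe; rewrite -[-1]expRK ler_ln ?posrE ?expR_gt0. Qed.

Lemma quarter_le_expRN1 : 1 / 4 <= expR (-1) :> R.
Proof.
have ln2 : 1 / 2 <= ln (2 : R).
  have half0 : 0 < 2^-1 :> R by rewrite invr_gt0.
  by have := ln_le_subr1 half0; rewrite lnV ?posrE //; lra.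
have -> : 1 / 4 = expR (- ln 4) :> R by rewrite expRN lnK ?posrE // div1r.
rewrite ler_expR lerN2 (_ : 4 = 2 * 2 :> R); last by rewrite -natrM.
by rewrite lnM ?posrE //; lra.
Qed.

Lemma entr_ge_id x : 0 <= x <= expR (-1) -> x <= entr x.
Proof.
case/andP=> x0 xe; have [->|xn0] := eqVneq x 0; first by rewrite entr0.
have xp : 0 < x by rewrite lt_def xn0.
have := ln_le_N1 xp xe; rewrite /entr; nra.
Qed.

Lemma entr_le_homo x m : 0 <= x -> x <= m -> m <= expR (-1) -> entr x <= entr m.
Proof.
move=> x0 xm me; have [m0|mn0] := eqVneq m 0.
  by have -> : x = m by apply/le_anti; rewrite xm m0 x0.
have mp : 0 < m by rewrite lt_def mn0 (le_trans x0 xm).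
have := entr_le_tangent x0 mp; have := ln_le_N1 mp me; nra.
Qed.

Lemma entr_le_entrM2 r : 0 <= r <= 1 / 4 -> entr r <= entr (2 * r).
Proof.
case/andP=> r0 r4; have [->|rn0] := eqVneq r 0; first by rewrite mulr0.
have rp : 0 < r by rewrite lt_def rn0.
have ln4r : ln (2 * (2 * r)) <= 0 by apply: ln_le0; lra.
rewrite !lnM ?posrE ?mulr_gt0 // in ln4r.
rewrite /entr lnM ?posrE //; nra.
Qed.

Lemma entrD_le x y : 0 <= x -> 0 <= y -> entr (x + y) <= entr x + entr y.
Proof.
move=> x0 y0; have [->|xn0] := eqVneq x 0; first by rewrite add0r entr0 add0r.
have [->|yn0] := eqVneq y 0; first by rewrite addr0 entr0 addr0.
have xp : 0 < x by rewrite lt_def xn0.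
have yp : 0 < y by rewrite lt_def yn0.
have lnx : ln x <= ln (x + y) by rewrite ler_ln ?posrE ?addr_gt0 //; lra.
have lny : ln y <= ln (x + y) by rewrite ler_ln ?posrE ?addr_gt0 //; lra.
rewrite /entr; nra.
Qed.

Lemma entr_dist_le p q : 0 <= p <= 1 -> 0 <= q <= 1 -> `|p - q| <= expR (-1) ->
  `|entr p - entr q| <= entr `|p - q|.
Proof.
have entr_sub_le (u v : R) : 0 <= u <= 1 -> 0 <= v <= 1 -> `|u - v| <= expR (-1) ->
    entr v - entr u <= entr `|u - v|.
  case/andP=> u0 u1 /andP[v0 _]; have [uv|vu] := leP u v.
    have vu0 : 0 <= v - u by rewrite subr_ge0.
    rewrite distrC ger0_norm // => _; have := entrD_le u0 vu0.
    by rewrite addrC subrK; lra.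
  have uv0 : 0 <= u - v by rewrite subr_ge0 ltW.
  rewrite ger0_norm // => uve; have := @entr_ge_id (u - v); rewrite uv0 uve => /(_ isT).
  have := entr_le_tangent v0 (le_lt_trans v0 vu); have := ln_le0 u1; nra.
move=> p01 q01 pqe; have := entr_sub_le p q p01 q01 pqe.
have := entr_sub_le q p q01 p01; rewrite distrC => /(_ pqe).
by rewrite ler_norml; lra.
Qed.

Lemma sum_entr_le_ln n (q : 'I_n -> R) : (forall i, 0 <= q i) -> \sum_i q i = 1 ->
  \sum_i entr (q i) <= ln n%:R.
Proof.
move=> q0 q1; have n0 : (0 < n)%N.
  by case: n q q0 q1 => // q _; rewrite big_ord0 => /eqP; rewrite eq_sym oner_eq0.
have nn0 : n%:R != 0 :> R by rewrite pnatr_eq0 -lt0n.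
have np : 0 < n%:R^-1 :> R by rewrite invr_gt0 ltr0n.
have sum_inv : \sum_(i < n) n%:R^-1 = 1 :> R.
  by rewrite sumr_const card_ord -[LHS]mulr_natl divff.
have entr_inv : entr n%:R^-1 *+ n = ln n%:R.
  by rewrite /entr lnV ?posrE ?ltr0n // mulrN opprK -[LHS]mulr_natl mulrA divff ?mul1r.
apply: le_trans (ler_sum _ (fun i _ => entr_le_tangent (q0 i) np)) _.
rewrite big_split /= -mulr_suml sumrB q1 sum_inv subrr mul0r addr0 sumr_const card_ord.
by rewrite entr_inv.
Qed.

End EntropyFunction.

Section StepFunctions.
Variable R : realType.
Local Notation mu := (@lebesgue_measure R).
Implicit Types (p q : R * R) (s : seq (R * (R * R))) (t : R).

Definition itv_ind p t : R := (p.1 <= t <= p.2)%R%:R.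

Definition hull (x y : R) : R * R := (Num.min x y, Num.max x y).

Definition step_fun s t : R := \sum_(w <- s) w.1 * itv_ind w.2 t.

Lemma ilen_hull x y : ilen (hull x y) = `|x - y|.
Proof.
rewrite /ilen /= maxEle minEle; case: leP => xy; last by rewrite ger0_norm // subr_ge0 ltW.
by rewrite distrC ger0_norm // subr_ge0.
Qed.

Lemma hull_valid x y : (hull x y).1 <= (hull x y).2.
Proof. by rewrite /= ge_min !le_max !lexx. Qed.

Lemma dist_ilen_le p q : `|ilen p - ilen q| <= `|p.1 - q.1| + `|p.2 - q.2|.
Proof.
have -> : ilen p - ilen q = (p.2 - q.2) - (p.1 - q.1) by rewrite /ilen; ring.
by rewrite [leRHS]addrC ler_normB.
Qed.

Lemma itv_ind_ge0 p t : 0 <= itv_ind p t.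
Proof. exact: ler0n. Qed.

Lemma itv_indE p : itv_ind p = \1_(`[p.1, p.2]%classic : set R).
Proof. by apply/funext => t; rewrite indicE mem_setE in_itv. Qed.

Lemma measurable_itv_ind p : measurable_fun setT (itv_ind p).
Proof. by rewrite itv_indE; exact: measurable_indic. Qed.

Lemma measurable_step_fun s : measurable_fun setT (step_fun s).
Proof.
apply: measurable_sum => w; apply: measurable_funM => //; exact: measurable_itv_ind.
Qed.

Lemma step_fun_ge0 s t : (forall w, w \in s -> 0 <= w.1) -> 0 <= step_fun s t.
Proof.
move=> s0; rewrite /step_fun big_seq sumr_ge0 // => w /s0 w0.
by rewrite mulr_ge0 ?itv_ind_ge0.
Qed.

Lemma integral_itv_ind c p : 0 <= c -> p.1 <= p.2 ->
  (\int[mu]_(t in [set: R]) (c * itv_ind p t)%:E = (c * ilen p)%:E)%E.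
Proof.
move=> c0 p12; under eq_integral do rewrite EFinM.
rewrite ge0_integralZl //; last 2 first.
- by apply/measurable_EFinP; exact: measurable_itv_ind.
- by move=> t _; rewrite lee_fin itv_ind_ge0.
have len_p : (mu `[p.1, p.2]%classic = (ilen p)%:E)%E.
  rewrite lebesgue_measure_itv /= lte_fin; case: ltP => [_|p21]; first by rewrite -EFinD.
  by rewrite /ilen (@le_anti _ _ p.1 p.2) ?p12 ?p21 // subrr.
rewrite itv_indE integral_indic // setIT EFinM; congr (_ * _)%E; exact: len_p.
Qed.

Lemma integral_step_fun s : (forall w, w \in s -> 0 <= w.1 /\ w.2.1 <= w.2.2) ->
  (\int[mu]_(t in [set: R]) (step_fun s t)%:E = (\sum_(w <- s) w.1 * ilen w.2)%:E)%E.
Proof.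
rewrite /step_fun; elim: s => [_|w s IHs ws].
  by under eq_integral do rewrite big_nil; rewrite integral0 big_nil.
have [w0 w12] := ws w (mem_head _ _).
have {}ws w' : w' \in s -> 0 <= w'.1 /\ w'.2.1 <= w'.2.2.
  by move=> w's; apply: ws; rewrite in_cons w's orbT.
under eq_integral do rewrite big_cons EFinD.
rewrite ge0_integralD //; last 4 first.
- by move=> t _; rewrite lee_fin mulr_ge0 ?itv_ind_ge0.
- by apply/measurable_EFinP; apply: measurable_funM => //; exact: measurable_itv_ind.
- by move=> t _; rewrite lee_fin step_fun_ge0 // => w' /ws[].
- by apply/measurable_EFinP; exact: measurable_step_fun.
by rewrite integral_itv_ind // IHs // big_cons EFinD.
Qed.

Lemma itv_ind_cover p q t : p.1 <= t <= p.2 -> ~~ (q.1 <= t <= q.2) ->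
  1 <= itv_ind (hull p.1 q.1) t + itv_ind (hull p.2 q.2) t.
Proof.
case/andP=> p1t tp2; rewrite negb_and -!ltNge /itv_ind /= !ge_min !le_max p1t tp2 /=.
by case/orP=> [/ltW ->|/ltW ->]; rewrite orbT /= ?lerDl ?lerDr ler0n.
Qed.

Lemma dist_itv_ind_le (P Q : R) p q t : 0 <= Q ->
  `|P * itv_ind p t - Q * itv_ind q t| <=
    Q * itv_ind (hull p.1 q.1) t + Q * itv_ind (hull p.2 q.2) t + `|P - Q| * itv_ind p t.
Proof.
move=> Q0; have h1 := itv_ind_ge0 (hull p.1 q.1) t; have h2 := itv_ind_ge0 (hull p.2 q.2) t.
have PQ : `|P| <= Q + `|P - Q|.
  by have := ler_normD (P - Q) Q; rewrite subrK (ger0_norm Q0) addrC.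
have in1 u : u.1 <= t <= u.2 -> itv_ind u t = 1 by rewrite /itv_ind => ->.
have out0 u : ~~ (u.1 <= t <= u.2) -> itv_ind u t = 0 by rewrite /itv_ind => /negbTE ->.
have [tp|tp] := boolP (p.1 <= t <= p.2); have [tq|tq] := boolP (q.1 <= t <= q.2).
- rewrite (in1 p) // (in1 q) // !mulr1; nra.
- have := itv_ind_cover tp tq; rewrite (in1 p) // (out0 q) // mulr1 mulr0 subr0; nra.
- have := itv_ind_cover tq tp; rewrite /hull minC maxC [Num.min p.2 _]minC [Num.max p.2 _]maxC.
  rewrite (in1 q) // (out0 p) // mulr0 mulr1 sub0r normrN ger0_norm //; nra.
- rewrite (out0 p) // (out0 q) // !mulr0 subr0 normr0 addr0; nra.
Qed.

End StepFunctions.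

Lemma dist_proportion_le (R : realType) n (u v : 'I_n -> R) (i : 'I_n) :
  (forall j, 0 <= u j) -> 0 < \sum_j u j -> 0 < \sum_j v j ->
  `|u i / \sum_j u j - v i / \sum_j v j| <= (\sum_j `|u j - v j|) / \sum_j v j.
Proof.
set U := \sum_j u j; set V := \sum_j v j => u0 U0 V0.
set p := u i / U; set e := v i - u i; set E := V - U.
have p0 : 0 <= p by rewrite divr_ge0 ?u0 ?ltW.
have p1 : p <= 1 by rewrite ler_pdivrMr // mul1r /U (bigD1 i) //= lerDl sumr_ge0.
have shift : p - v i / V = (p * (E - e) - (1 - p) * e) / V.
  by rewrite /p /E /e; field; rewrite !gt_eqF.
have split_i : `|E - e| + `|e| <= \sum_j `|u j - v j|.
  have -> : E - e = \sum_(j | j != i) (v j - u j).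
    by rewrite /E /e /U /V -sumrB (bigD1 i) //= addrAC subrr add0r.
  rewrite [\sum_j `|u j - v j|](bigD1 i) //= addrC /e distrC lerD2r.
  by apply: le_trans (ler_norm_sum _ _ _) _; apply: ler_sum => j _; rewrite distrC.
rewrite shift normrM [`|V^-1|]gtr0_norm ?invr_gt0 // ler_pM2r ?invr_gt0 //.
clearbody p; apply: le_trans (ler_normB _ _) _.
rewrite !normrM (ger0_norm p0) [`|1 - p|]ger0_norm ?subr_ge0 //.
have := normr_ge0 (E - e); have := normr_ge0 e; nra.
Qed.

Lemma dist_proportion_le_max (R : realType) n (u v : 'I_n -> R) (i : 'I_n) :
  (forall j, 0 <= u j) -> (forall j, 0 <= v j) -> 0 < \sum_j u j -> 0 < \sum_j v j ->
  `|u i / \sum_j u j - v i / \sum_j v j|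
    <= (\sum_j `|u j - v j|) / Num.max (\sum_j u j) (\sum_j v j).
Proof.
move=> u0 v0 U0 V0; have [_|_] := leP (\sum_j u j) (\sum_j v j).
  exact: dist_proportion_le.
rewrite distrC (eq_bigr _ (fun j _ => distrC (u j) (v j))); exact: dist_proportion_le.
Qed.

Section EntropySummary.
Variable R : realType.
Implicit Types (X : barcode R).

Lemma entropy_summaryE X :
  entropy_summary X = step_fun [seq (entr (ilen p / total_len X), p) | p <- X].
Proof.
apply/funext => t; rewrite /entropy_summary /step_fun big_map -sumrN.
by apply: eq_bigr => p _; rewrite /itv_ind /entr; case: ifP; rewrite ?mulr1 ?mulr0 ?oppr0.
Qed.

Lemma measurable_entropy_summary X : measurable_fun setT (entropy_summary X).
Proof. rewrite entropy_summaryE; exact: measurable_step_fun. Qed.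

Section Families.
Variables (T : finType) (f : T -> R * R).

Lemma total_len_codom : total_len (codom f) = \sum_i ilen (f i).
Proof. exact: big_image. Qed.

Lemma entropy_summary_codom t :
  entropy_summary (codom f) t
    = \sum_i entr (ilen (f i) / total_len (codom f)) * itv_ind (f i) t.
Proof. by rewrite entropy_summaryE /step_fun big_map big_image. Qed.

Hypothesis vf : forall i, (f i).1 <= (f i).2.

Lemma ilen_le_total_len i : 0 <= ilen (f i) <= total_len (codom f).
Proof.
have l0 j : 0 <= ilen (f j) by rewrite subr_ge0.
by rewrite l0 total_len_codom (bigD1 i) //= lerDl sumr_ge0.
Qed.

Lemma proportion01 i : 0 <= ilen (f i) / total_len (codom f) <= 1.
Proof.
have /andP[l0 lL] := ilen_le_total_len i.
rewrite divr_ge0 ?(le_trans l0 lL) //=; have [->|L0] := eqVneq (total_len (codom f)) 0.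
  by rewrite invr0 mulr0.
by rewrite ler_pdivrMr ?mul1r // lt_def L0 (le_trans l0 lL).
Qed.

End Families.
End EntropySummary.

Section MatchedFamilies.
Variables (R : realType) (n : nat) (a b : 'I_n -> R * R).
Hypotheses (va : forall i, (a i).1 <= (a i).2) (vb : forall i, (b i).1 <= (b i).2).
Local Notation mu := (@lebesgue_measure R).
Local Notation La := (total_len (codom a)).
Local Notation Lb := (total_len (codom b)).
Local Notation pa i := (ilen (a i) / La).
Local Notation qb i := (ilen (b i) / Lb).

Lemma integral_dist_entropy_summary_le_sum :
  (\int[mu]_(t in [set: R])
     (`|entropy_summary (codom a) t - entropy_summary (codom b) t|)%:E
   <= (\sum_i (entr (qb i) * (`|(a i).1 - (b i).1| + `|(a i).2 - (b i).2|)
               + `|entr (pa i) - entr (qb i)| * ilen (a i)))%:E)%E.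
Proof.
pose W i := [:: (entr (qb i), hull (a i).1 (b i).1); (entr (qb i), hull (a i).2 (b i).2);
                (`|entr (pa i) - entr (qb i)|, a i)].
have W_ok w : w \in flatten [seq W i | i <- index_enum 'I_n] -> 0 <= w.1 /\ w.2.1 <= w.2.2.
  case/flatten_mapP => i _; rewrite !inE => /or3P[] /eqP ->;
    by rewrite /= ?entr_ge0 ?proportion01 ?hull_valid ?va.
set F := flatten _ in W_ok.
have pointwise t :
    `|entropy_summary (codom a) t - entropy_summary (codom b) t| <= step_fun F t.
  rewrite !entropy_summary_codom -sumrB /step_fun big_flatten big_map.
  apply: le_trans (ler_norm_sum _ _ _) (ler_sum _ _) => i _.
  by rewrite !big_cons big_nil /= addr0 addrA dist_itv_ind_le ?entr_ge0 ?proportion01.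
apply: (@le_trans _ _ (\int[mu]_(t in [set: R]) (step_fun F t)%:E)%E).
  apply: ge0_le_integral => //.
  - apply/measurable_EFinP; apply: measurableT_comp => //.
    by apply: measurable_funB; exact: measurable_entropy_summary.
  - by apply/measurable_EFinP; exact: measurable_step_fun.
  - by move=> t _; rewrite lee_fin pointwise.
rewrite integral_step_fun // lee_fin /F big_flatten big_map.
under eq_bigr => i _ do rewrite /W !big_cons big_nil /= addr0 addrA !ilen_hull -mulrDr.
exact: lexx.
Qed.

Lemma integral_dist_entropy_summary_le c :
  0 < La -> 0 < Lb ->
  (forall i, `|(a i).1 - (b i).1| <= c /\ `|(a i).2 - (b i).2| <= c) ->
  let r := 2 * n%:R * c / Lmax (codom a) (codom b) in r <= 1 / 4 ->
  (\int[mu]_(t in [set: R])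
     (`|entropy_summary (codom a) t - entropy_summary (codom b) t|)%:E
   <= (La * entr r + 2 * c * ln n%:R)%:E)%E.
Proof.
move=> La0 Lb0 hc r r4.
have c0 : 0 <= c.
  move: La0; rewrite total_len_codom; case: (pickP (fun _ : 'I_n => true)) => [i0 _ _|none].
    exact: le_trans (normr_ge0 ((a i0).1 - (b i0).1)) (hc i0).1.
  by rewrite big_pred0 // ltxx.
have r0 : 0 <= r by rewrite /r divr_ge0 ?mulr_ge0 ?le_max ?(ltW La0).
have la0 i : 0 <= ilen (a i) by rewrite subr_ge0.
have lb0 i : 0 <= ilen (b i) by rewrite subr_ge0.
have pq i : `|pa i - qb i| <= r.
  have := @dist_proportion_le_max _ _ (fun j => ilen (a j)) (fun j => ilen (b j)) i la0 lb0.
  rewrite /= -!total_len_codom => /(_ La0 Lb0) /le_trans; apply.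
  rewrite /r /Lmax ler_wpM2r ?invr_ge0 ?le_max ?(ltW La0) //.
  apply: le_trans (ler_sum _ (fun j _ => dist_ilen_le (a j) (b j))) _.
  apply: le_trans (ler_sum _ (fun j _ => lerD (hc j).1 (hc j).2)) _.
  by rewrite sumr_const card_ord -mulr_natl; lra.
have entr_pq i : `|entr (pa i) - entr (qb i)| <= entr r.
  have re : r <= expR (-1) := le_trans r4 (quarter_le_expRN1 R).
  apply: le_trans (entr_dist_le (proportion01 va i) (proportion01 vb i) (le_trans (pq i) re)) _.
  exact: entr_le_homo (normr_ge0 _) (pq i) re.
have sum_q : \sum_i qb i = 1 by rewrite -mulr_suml -total_len_codom divff ?gt_eqF.
have sum_entr := sum_entr_le_ln (fun i => (andP (proportion01 vb i)).1) sum_q.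
apply: le_trans integral_dist_entropy_summary_le_sum _; rewrite lee_fin.
have term i : entr (qb i) * (`|(a i).1 - (b i).1| + `|(a i).2 - (b i).2|)
      + `|entr (pa i) - entr (qb i)| * ilen (a i)
    <= 2 * c * entr (qb i) + entr r * ilen (a i).
  have := entr_ge0 (proportion01 vb i); have := hc i; have := entr_pq i; have := la0 i; nra.
apply: le_trans (ler_sum _ (fun i _ => term i)) _.
rewrite big_split /= -mulr_sumr -mulr_sumr -total_len_codom addrC mulrC lerD2l.
by rewrite ler_wpM2l ?mulr_ge0.
Qed.

End MatchedFamilies.

Lemma integral_dist_entropy_summary_le_Lmin (R : realType) n (a b : 'I_n -> R * R) c :
  (forall i, (a i).1 <= (a i).2) -> (forall i, (b i).1 <= (b i).2) ->
  0 < total_len (codom a) -> 0 < total_len (codom b) ->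
  (forall i, `|(a i).1 - (b i).1| <= c /\ `|(a i).2 - (b i).2| <= c) ->
  let r := 2 * n%:R * c / Lmax (codom a) (codom b) in r <= 1 / 4 ->
  (\int[@lebesgue_measure R]_(t in [set: R])
     (`|entropy_summary (codom a) t - entropy_summary (codom b) t|)%:E
   <= (Lmin (codom a) (codom b) * entr r + 2 * c * ln n%:R)%:E)%E.
Proof.
move=> va vb La0 Lb0 hc r r4; rewrite /Lmin.
have [_|_] := leP (total_len (codom a)) (total_len (codom b)).
  exact: integral_dist_entropy_summary_le.
under eq_integral do rewrite distrC.
have hc' i : `|(b i).1 - (a i).1| <= c /\ `|(b i).2 - (a i).2| <= c.
  by rewrite !(distrC (b i).1) !(distrC (b i).2).
by have := integral_dist_entropy_summary_le vb va Lb0 La0 hc'; rewrite /Lmax maxC; apply.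
Qed.

Section Padding.
Variable R : realType.
Implicit Types (X Y : barcode R) (ts : seq R).

Lemma perm_total_len X Y : perm_eq X Y -> total_len X = total_len Y.
Proof. exact: perm_big. Qed.

Lemma perm_entropy_summary X Y : perm_eq X Y -> entropy_summary X = entropy_summary Y.
Proof.
by move=> XY; apply/funext => t; rewrite /entropy_summary (perm_total_len XY) (perm_big _ XY).
Qed.

Lemma total_len_pad X ts : total_len (pad X ts) = total_len X.
Proof.
rewrite /total_len big_cat big_map /= [X in _ + X]big1 ?addr0 // => t _.
by rewrite /ilen subrr.
Qed.

Lemma entropy_summary_pad X ts : entropy_summary (pad X ts) = entropy_summary X.
Proof.
apply/funext => t; rewrite /entropy_summary total_len_pad big_cat big_map /=.
rewrite [X in _ + X]big1 ?addr0 // => u _.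
by rewrite /ilen subrr !mul0r; case: ifP.
Qed.

Lemma nth_pad_lt X ts k : (k < size X)%N -> nth (0, 0) (pad X ts) k = nth (0, 0) X k.
Proof. by move=> kX; rewrite nth_cat kX. Qed.

Lemma nth_pad_ge X ts k : (size X <= k)%N ->
  nth (0, 0) (pad X ts) k = (nth 0 ts (k - size X), nth 0 ts (k - size X)).
Proof.
rewrite leqNgt => /negbTE kX; rewrite nth_cat kX.
have [kts|tsk] := ltnP (k - size X) (size ts); first by rewrite (nth_map 0).
by rewrite !nth_default ?size_map.
Qed.

Lemma valid_nth X k : valid_barcode X -> (nth (0, 0) X k).1 <= (nth (0, 0) X k).2.
Proof.
move=> /(all_nthP (0, 0)) vX; have [kX|Xk] := ltnP k (size X); first exact: vX.
by rewrite nth_default.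
Qed.

Lemma valid_pad X ts : valid_barcode X -> valid_barcode (pad X ts).
Proof.
move=> vX; rewrite /valid_barcode all_cat; apply/andP; split; first exact: vX.
by apply/allP => _ /mapP[t _ ->].
Qed.

End Padding.

Lemma codom_nth (T : Type) (x0 : T) (s : seq T) n : size s = n ->
  codom (fun i : 'I_n => nth x0 s i) = s.
Proof.
move=> <-; rewrite codomE (map_comp (nth x0 s) val) val_enum_ord.
exact: mkseq_nth.
Qed.

Lemma perm_codom_comp (T : finType) (U : eqType) (f : T -> U) (g : {perm T}) :
  perm_eq (codom (f \o g)) (codom f).
Proof.
rewrite !codomE map_comp; apply: perm_map; apply: uniq_perm; rewrite ?enum_uniq //.
  by rewrite map_inj_uniq ?enum_uniq //; exact: perm_inj.
by move=> x; rewrite -codomE perm_onto mem_enum.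
Qed.

Lemma inf_eq_min (R : realType) (E : set R) x : E x -> lbound E x -> inf E = x.
Proof.
move=> Ex lbx; apply/le_anti/andP; split; first exact: ge_inf (ex_intro _ x lbx) _ Ex.
by apply: lb_le_inf => //; exists x.
Qed.

Definition mid (R : realType) (p : R * R) : R := (p.1 + p.2) / 2.

Lemma mid_cost_le (R : realType) (p : R * R) (t : R) : p.1 <= p.2 ->
  Num.max `|mid p - p.1| `|mid p - p.2| <= Num.max `|t - p.1| `|t - p.2|.
Proof.
move=> p12; have -> : `|mid p - p.1| = ilen p / 2.
  by rewrite /mid ger0_norm /ilen; [field | lra].
have -> : `|mid p - p.2| = ilen p / 2.
  by rewrite /mid ler0_norm /ilen; [field | lra].
have tri : ilen p <= `|t - p.1| + `|t - p.2|.
  have -> : ilen p = `|(t - p.1) - (t - p.2)| by rewrite ger0_norm /ilen; [ring | lra].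
  exact: ler_normB.
by rewrite maxxx; have [|] := leP `|t - p.1| `|t - p.2|; lra.
Qed.

Section OptimalMatching.
Variables (R : realType) (A B : barcode R).
Hypotheses (vA : valid_barcode A) (vB : valid_barcode B).
Local Notation n := (nmax A B).

(* Slot i >= size X of the padded X receives the degenerate interval at the
   midpoint of its partner g i in Y, the cheapest choice for every matching g. *)
Definition mid_pad (X Y : barcode R) (g : 'S_n) : seq R :=
  drop (size X) [seq mid (nth (0, 0) Y (g i)) | i <- enum 'I_n].

Lemma size_mid_pad X Y g : size (mid_pad X Y g) = (n - size X)%N.
Proof. by rewrite size_drop size_map size_enum_ord. Qed.

Lemma nth_mid_pad X Y g (i : 'I_n) : (size X <= i)%N ->
  nth 0 (mid_pad X Y g) (i - size X) = mid (nth (0, 0) Y (g i)).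
Proof.
by move=> Xi; rewrite nth_drop subnKC // (nth_map i) ?size_enum_ord // nth_ord_enum.
Qed.

Lemma match_cost_mid_pad_le (g : 'S_n) tsA tsB :
  match_cost (pad A (mid_pad A B g)) (pad B (mid_pad B A g^-1)) g
    <= match_cost (pad A tsA) (pad B tsB) g.
Proof.
apply: le_bigmax2 => i _.
have [iA|Ai] := ltnP i (size A); have [giB|Bgi] := ltnP (g i) (size B).
- by rewrite !nth_pad_lt.
- rewrite !(nth_pad_lt _ iA) !(nth_pad_ge _ Bgi) nth_mid_pad // permK /=.
  by rewrite !(distrC (nth _ A i).1) !(distrC (nth _ A i).2) mid_cost_le ?valid_nth.
- rewrite !(nth_pad_ge _ Ai) !(nth_pad_lt _ giB) nth_mid_pad //=.
  by rewrite mid_cost_le ?valid_nth.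
- by move: (ltn_ord i) Ai Bgi (ltn_ord (g i)); rewrite /nmax; lia.
Qed.

Lemma bottleneck_attained : exists tsA tsB (g : 'S_n),
  [/\ size tsA = (n - size A)%N, size tsB = (n - size B)%N &
      bottleneck A B = match_cost (pad A tsA) (pad B tsB) g].
Proof.
pose K (g : 'S_n) := match_cost (pad A (mid_pad A B g)) (pad B (mid_pad B A g^-1)) g.
have [g0 _ K_min] := arg_minP K (i0 := 1%g) (P := predT) isT.
exists (mid_pad A B g0), (mid_pad B A g0^-1), g0; rewrite !size_mid_pad; split => //.
apply: inf_eq_min; first by exists (mid_pad A B g0), (mid_pad B A g0^-1), g0; rewrite !size_mid_pad.
move=> _ [tsA [tsB [g [_ _ ->]]]].
exact: le_trans (K_min g isT) (match_cost_mid_pad_le g tsA tsB).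
Qed.

Lemma bottleneck_matched_families : exists (a b : 'I_n -> R * R) tsA tsB,
  [/\ forall i, (a i).1 <= (a i).2, forall i, (b i).1 <= (b i).2,
      codom a = pad A tsA, perm_eq (codom b) (pad B tsB) &
      forall i, `|(a i).1 - (b i).1| <= bottleneck A B /\
                `|(a i).2 - (b i).2| <= bottleneck A B].
Proof.
have [tsA [tsB [g [sA sB d_eq]]]] := bottleneck_attained.
have sPA : size (pad A tsA) = n by rewrite size_cat size_map sA subnKC ?leq_maxl.
have sPB : size (pad B tsB) = n by rewrite size_cat size_map sB subnKC ?leq_maxr.
exists (fun i => nth (0, 0) (pad A tsA) i), (fun i => nth (0, 0) (pad B tsB) (g i)), tsA, tsB.
split; [by move=> i; apply/valid_nth/valid_pad..| exact: codom_nth | |].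
  by rewrite -[X in perm_eq _ X](codom_nth (0, 0) sPB); exact: perm_codom_comp.
by move=> i; apply/andP; rewrite -ge_max d_eq; exact: le_bigmax.
Qed.

End OptimalMatching.

Lemma bottleneck_ge0 (R : realType) (A B : barcode R) : 0 <= bottleneck A B.
Proof.
apply: lb_le_inf => [|_ [tsA [tsB [g [_ _ ->]]]]]; last exact: bigmax_ge_id.
by eexists; exists (nseq (nmax A B - size A) 0), (nseq (nmax A B - size B) 0), 1%g;
  rewrite !size_nseq.
Qed.

Lemma bottleneck_ln_le (R : realType) (A B : barcode R) : 0 < total_len A ->
  2 * bottleneck A B * ln (nmax A B)%:R
    <= 2 * rel_error A B * (Lmax A B * (ln (nmax A B)%:R / (nmax A B)%:R)).
Proof.
move=> LA0; have L0 : 0 < Lmax A B by rewrite lt_max LA0.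
have n0 : (0 < nmax A B)%N.
  rewrite lt0n; apply: contraTneq LA0 => n0; move: (leq_maxl (size A) (size B)).
  by rewrite -/(nmax A B) n0 leqn0 size_eq0 => /eqP ->; rewrite /total_len big_nil ltxx.
have lnn : 0 <= ln (nmax A B)%:R :> R by rewrite ln_ge0 // ler1n.
have -> : 2 * rel_error A B * (Lmax A B * (ln (nmax A B)%:R / (nmax A B)%:R))
    = 4 * (bottleneck A B * ln (nmax A B)%:R).
  by rewrite /rel_error; field; rewrite pnatr_eq0 -lt0n n0 gt_eqF.
have := mulr_ge0 (bottleneck_ge0 A B) lnn; lra.
Qed.

Theorem theorem7 (R : realType) (A B : barcode R) :
  valid_barcode A -> valid_barcode B ->
  0 < total_len A -> 0 < total_len B ->
  rel_error A B <= 1 / 4 ->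
  (L1_dist_entropy A B <=
     (- 2 * Lmin A B * rel_error A B * ln (2 * rel_error A B)
      + 2 * bottleneck A B * ln (nmax A B)%:R)%:E)%E /\
  - 2 * Lmin A B * rel_error A B * ln (2 * rel_error A B)
      + 2 * bottleneck A B * ln (nmax A B)%:R
  <= 2 * rel_error A B *
       (- Lmin A B * ln (2 * rel_error A B)
        + Lmax A B * (ln (nmax A B)%:R / (nmax A B)%:R)).
Proof.
move=> vA vB LA0 LB0 r4.
have [a [b [tsA [tsB [va vb codom_a codom_b hc]]]]] := bottleneck_matched_families vA vB.
have eSA : entropy_summary (codom a) = entropy_summary A.
  by rewrite codom_a entropy_summary_pad.
have eSB : entropy_summary (codom b) = entropy_summary B.
  by rewrite (perm_entropy_summary codom_b) entropy_summary_pad.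
have eLA : total_len (codom a) = total_len A by rewrite codom_a total_len_pad.
have eLB : total_len (codom b) = total_len B.
  by rewrite (perm_total_len codom_b) total_len_pad.
have := integral_dist_entropy_summary_le_Lmin va vb _ _ hc.
rewrite eSA eSB /Lmin /Lmax eLA eLB -/(Lmax A B) -/(Lmin A B) -/(rel_error A B).
move=> /(_ LA0 LB0 r4) bound.
have Lmin0 : 0 <= Lmin A B by rewrite /Lmin le_min !ltW.
have r0 : 0 <= rel_error A B.
  by rewrite /rel_error divr_ge0 ?mulr_ge0 ?bottleneck_ge0 ?le_max ?(ltW LA0).
have := ler_wpM2l Lmin0 (entr_le_entrM2 (introT andP (conj r0 r4))); rewrite /entr => entr2.
split; last by have := bottleneck_ln_le B LA0; lra.
by apply: le_trans bound _; rewrite lee_fin lerD2r /entr; lra.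
Qed.
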